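(* Each of the operators $\mathcal{S}$, $\widetilde{\mathcal{S}}$, $\mathcal{S}_{+\Delta}$, $\mathcal{S}_{-\Delta}$, $\widetilde{\mathcal{S}}_\Delta$, $\mathcal{T}^{(r,\pm)}_{rim}$, $\mathcal{S}^{(r,\pm)}_\Delta$, $\mathcal{T}^{(r,s)}_{rim}$, $\widetilde{\mathcal{T}}^{(r)}_{rim}$, $\widetilde{\mathcal{S}}^{(r)}_\Delta$ ($r,s\in\mathbb{N}$) defined below, mapping $\mathbb{D}$ into $\mathbb{D}$, is (a) Lipschitz with respect to $\|\cdot\|$, hence continuous in the $\|\cdot\|$ norm; and (b) $\Lambda$-compatible; consequently each of them is jointly $J_1$-continuous at every $x\in\mathbb{D}$.
   Context: $\mathbb{D}=\mathbb{D}([0,1],\mathbb{R})$ is the space of càdlàg functions on $[0,1]$ with the Skorokhod $J_1$-topology, $\|x\|=\sup_{0\le\tau\le1}|x(\tau)|$. $\Lambda$ is the set of continuous strictly increasing $\lambda:[0,1]\to[0,1]$ with $\lambda(0)=0,\lambda(1)=1$, and $I$ is the identity. $x_n\to x$ in $J_1$ means there are $\lambda_n\in\Lambda$ with $\|\lambda_n-I\|\vee\|x_n\circ\lambda_n-x\|\to0$. $\Psi:\mathbb{D}\to\mathbb{D}$ is $\Lambda$-compatible if $\Psi(x)\circ\lambda=\Psi(x\circ\lambda)$ for all $x\in\mathbb{D},\lambda\in\Lambda$; it is jointly $J_1$-continuous at $x$ if for every $x_n\to x$ in $J_1$ there exist $\lambda_n\in\Lambda$ with simultaneously $\|\lambda_n-I\|\to0$,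 $\|x_n\circ\lambda_n-x\|\to0$, $\|\Psi(x_n)\circ\lambda_n-\Psi(x)\|\to0$. For $x\in\mathbb{D}$ let $\Delta x(\tau)=x(\tau)-x(\tau-)$ for $\tau>0$ and $\Delta x(0)=0$. Define, for $\tau\in[0,1]$: (i) $\mathcal{S}(x)(\tau)=\sup_{0\le s\le\tau}x(s)$; (ii) $\widetilde{\mathcal{S}}(x)(\tau)=\sup_{0\le s\le\tau}|x(s)|$; (iii) $\mathcal{S}_{\pm\Delta}(x)(\tau)=\mathcal{S}_\Delta(\pm x)(\tau):=\sup_{0\le s\le\tau}\Delta(\pm x)(s)$; (iv) $\widetilde{\mathcal{S}}_\Delta(x)(\tau)=\sup_{0\le s\le\tau}|\Delta x(s)|$. (v) $\mathcal{T}^{(1,\pm)}_{rim}(x)=x\mp\mathcal{S}_{\pm\Delta}(x)$ and for $r\ge2$, $\mathcal{T}^{(r,\pm)}_{rim}(x)=\mathcal{T}^{(1,\pm)}_{rim}\circ\mathcal{T}^{(r-1,\pm)}_{rim}(x)$. (vi) $\mathcal{S}^{(1,\pm)}_\Delta(x)=\mathcal{S}_{\pm\Delta}(x)$ and for $r\ge2$, $\mathcal{S}^{(r,\pm)}_\Delta(x)=\mathcal{S}^{(1,\pm)}_\Delta\circ\mathcal{T}^{(r-1,\pm)}_{rim}(x)$. (vii) $\mathcal{T}^{(r,s)}_{rim}(x)=\mathcal{T}^{(r,+)}_{rim}\circ\mathcal{T}^{(s,-)}_{rim}(x)=\mathcal{T}^{(s,-)}_{rim}\circ\mathcal{T}^{(r,+)}_{rim}(x)$.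 (viii) $\widetilde{\mathcal{T}}^{(1)}_{rim}(x)=x-\widetilde{\mathcal{S}}_\Delta(x)$ and for $r\ge2$, $\widetilde{\mathcal{T}}^{(r)}_{rim}(x)=\widetilde{\mathcal{T}}^{(1)}_{rim}\circ\widetilde{\mathcal{T}}^{(r-1)}_{rim}(x)$. (ix) $\widetilde{\mathcal{S}}^{(1)}_\Delta(x)=\widetilde{\mathcal{S}}_\Delta(x)$ and for $r\ge2$, $\widetilde{\mathcal{S}}^{(r)}_\Delta(x)=\widetilde{\mathcal{S}}_\Delta\circ\widetilde{\mathcal{T}}^{(r-1)}_{rim}(x)$. *)

From Stdlib Require Import Reals Lra.
From Coquelicot Require Import Coquelicot.
Open Scope R_scope.

(* Elements of D are represented by functions R -> R; only their values on
   [0,1] matter. *)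
Definition I01 (t : R) : Prop := 0 <= t <= 1.

Definition cadlag (x : R -> R) : Prop :=
  (forall t, 0 <= t < 1 -> filterlim x (at_right t) (locally (x t))) /\
  (forall t, 0 < t <= 1 -> exists l : R, filterlim x (at_left t) (locally l)).

Definition supOn (f : R -> R) (tau : R) : R :=
  real (Lub_Rbar (fun v => exists s, 0 <= s <= tau /\ v = f s)).

Definition supnorm (f : R -> R) : R :=
  real (Lub_Rbar (fun v => exists s, I01 s /\ v = Rabs (f s))).

(* left limit x(t-), computed along t - 1/(n+1) (equals the left limit for
   càdlàg x and t > 0) *)
Definition leftlim (x : R -> R) (t : R) : R :=
  real (Lim_seq (fun n => x (t - / INR (S n)))).

Definition Delta (x : R -> R) (t : R) : R :=
  if Rle_dec t 0 then 0 else x t - leftlim x t.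

Definition opp (x : R -> R) : R -> R := fun t => - x t.
Definition pm (b : bool) (x : R -> R) : R -> R := if b then x else opp x.

Definition Ssup (x : R -> R) : R -> R := fun tau => supOn x tau.
Definition Ssup_abs (x : R -> R) : R -> R := fun tau => supOn (fun s => Rabs (x s)) tau.
(* (iii) S_{+Delta} (b = true), S_{-Delta} (b = false): S_Delta(+-x) *)
Definition S_Delta (x : R -> R) : R -> R := fun tau => supOn (Delta x) tau.
Definition S_pmDelta (b : bool) (x : R -> R) : R -> R := S_Delta (pm b x).
Definition S_Delta_abs (x : R -> R) : R -> R :=
  fun tau => supOn (fun s => Rabs (Delta x s)) tau.

Definition T1_rim (b : bool) (x : R -> R) : R -> R :=
  fun t => if b then x t - S_pmDelta b x t else x t + S_pmDelta b x t.
Definition T_rim (r : nat) (b : bool) (x : R -> R) : R -> R :=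
  Nat.iter r (T1_rim b) x.
Definition S_rim (r : nat) (b : bool) (x : R -> R) : R -> R :=
  S_pmDelta b (T_rim (r - 1) b x).
Definition T_rim2 (r s : nat) (x : R -> R) : R -> R :=
  T_rim r true (T_rim s false x).
Definition Tt1_rim (x : R -> R) : R -> R := fun t => x t - S_Delta_abs x t.
Definition Tt_rim (r : nat) (x : R -> R) : R -> R := Nat.iter r Tt1_rim x.
Definition St_rim (r : nat) (x : R -> R) : R -> R :=
  S_Delta_abs (Tt_rim (r - 1) x).

Inductive in_family : ((R -> R) -> (R -> R)) -> Prop :=
| fam_S : in_family Ssup
| fam_St : in_family Ssup_abs
| fam_SpD : in_family (S_pmDelta true)
| fam_SmD : in_family (S_pmDelta false)
| fam_StD : in_family S_Delta_abs
| fam_T : forall r b, (1 <= r)%nat -> in_family (T_rim r b)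
| fam_SD : forall r b, (1 <= r)%nat -> in_family (S_rim r b)
| fam_T2 : forall r s, (1 <= r)%nat -> (1 <= s)%nat -> in_family (T_rim2 r s)
| fam_Tt : forall r, (1 <= r)%nat -> in_family (Tt_rim r)
| fam_StDr : forall r, (1 <= r)%nat -> in_family (St_rim r).

Definition in_Lambda (l : R -> R) : Prop :=
  (forall t, I01 t -> filterlim l (within I01 (locally t)) (locally (l t))) /\
  (forall s t, I01 s -> I01 t -> s < t -> l s < l t) /\
  l 0 = 0 /\ l 1 = 1.

Definition unif_cv (fn : nat -> R -> R) (f : R -> R) : Prop :=
  forall eps : R, 0 < eps ->
    exists N : nat, forall n, (N <= n)%nat -> forall t, I01 t -> Rabs (fn n t - f t) <= eps.

Definition J1_cv (xn : nat -> R -> R) (x : R -> R) : Prop :=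
  exists ln : nat -> R -> R, (forall n, in_Lambda (ln n)) /\
    unif_cv ln (fun t => t) /\ unif_cv (fun n t => xn n (ln n t)) x.

Definition norm_lipschitz (Psi : (R -> R) -> (R -> R)) : Prop :=
  exists K : R, 0 <= K /\ forall x y, cadlag x -> cadlag y ->
    supnorm (fun t => Psi x t - Psi y t) <= K * supnorm (fun t => x t - y t).

Definition Lambda_compatible (Psi : (R -> R) -> (R -> R)) : Prop :=
  forall x l, cadlag x -> in_Lambda l ->
    forall t, I01 t -> Psi x (l t) = Psi (fun u => x (l u)) t.

Definition jointly_J1_continuous_at (Psi : (R -> R) -> (R -> R)) (x : R -> R) : Prop :=
  forall xn : nat -> R -> R, (forall n, cadlag (xn n)) -> J1_cv xn x ->
    exists ln : nat -> R -> R, (forall n, in_Lambda (ln n)) /\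
      unif_cv ln (fun t => t) /\
      unif_cv (fun n t => xn n (ln n t)) x /\
      unif_cv (fun n t => Psi (xn n) (ln n t)) (Psi x).

From Stdlib Require Import Reals Lra Lia Classical.
From Coquelicot Require Import Coquelicot.
(* Imported last so that [opp] is the one of Defs, not Coquelicot's. *)
From Pilot Require Import Defs.
Open Scope R_scope.

(* Every operator of the family is generated from the identity and the jump map
   Delta by pointwise negation, absolute value and sums, the running supremum
   tau |-> sup_{s <= tau}, composition and iteration.  Each of these steps
   preserves four properties: a pointwise bound |Psi x - Psi y| <= K ||x - y||
   on [0,1] (Delta has K = 2 since |x(t-) - y(t-)| <= ||x - y||, and a running
   supremum has K = 1), commutation with time changes (lambda is an increasing
   bijection of [0,1], so it maps [0,tau] onto [0,lambda tau] and preserves left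
   limits), dependence on the values on [0,1] only, and boundedness.  Composition
   also needs the inner operator to map D into D; for the running supremum of the
   jumps this holds because the jumps are small just to the right of any point.
   Joint J1-continuity then holds with the time changes of x_n -> x themselves,
   since Psi(x_n) o lambda_n = Psi(x_n o lambda_n) is within
   K ||x_n o lambda_n - x|| of Psi(x). *)

Lemma Lub_Rbar_real_ub (E : R -> Prop) v :
  (exists B, forall w, E w -> w <= B) -> E v -> v <= real (Lub_Rbar E).
Proof.
  intros [B HB] Ev. destruct (Lub_Rbar_correct E) as [Hub Hlub].
  destruct (Lub_Rbar E) as [r| |]; simpl.
  - apply (Hub v Ev).
  - exfalso. apply (Hlub (Finite B)). intros w Ew. simpl. now apply HB.
  - specialize (Hub v Ev). contradiction.
Qed.

Lemma Lub_Rbar_real_le (E : R -> Prop) B :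
  (exists v, E v) -> (forall w, E w -> w <= B) -> real (Lub_Rbar E) <= B.
Proof.
  intros [v Ev] HB. destruct (Lub_Rbar_correct E) as [Hub Hlub].
  destruct (Lub_Rbar E) as [r| |]; simpl.
  - apply (Hlub (Finite B)). intros w Ew. simpl. now apply HB.
  - exfalso. apply (Hlub (Finite B)). intros w Ew. simpl. now apply HB.
  - specialize (Hub v Ev). contradiction.
Qed.

(** * Càdlàg functions *)

Definition is_right_cont (x : R -> R) t := forall e, 0 < e -> exists d, 0 < d /\
  forall u, t < u < t + d -> Rabs (x u - x t) < e.

Definition is_left_lim (x : R -> R) t l := forall e, 0 < e -> exists d, 0 < d /\
  forall u, t - d < u < t -> Rabs (x u - l) < e.

Lemma filterlim_at_right_iff (x : R -> R) t :
  filterlim x (at_right t) (locally (x t)) <-> is_right_cont x t.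
Proof.
  rewrite filterlim_locally. split.
  - intros H e He. destruct (H (mkposreal e He)) as [d Hd]. exists d. split; [apply cond_pos|].
    intros u Hu. apply (Hd u); [|lra]. change (Rabs (u - t) < d). rewrite Rabs_right; lra.
  - intros H [e He]. destruct (H e He) as [d [Hd0 Hd]]. exists (mkposreal d Hd0).
    intros u Hu Htu. change (Rabs (u - t) < d) in Hu. apply Rabs_def2 in Hu.
    apply (Hd u). lra.
Qed.

Lemma filterlim_at_left_iff (x : R -> R) t l :
  filterlim x (at_left t) (locally l) <-> is_left_lim x t l.
Proof.
  rewrite filterlim_locally. split.
  - intros H e He. destruct (H (mkposreal e He)) as [d Hd]. exists d. split; [apply cond_pos|].
    intros u Hu. apply (Hd u); [|lra]. change (Rabs (u - t) < d). rewrite Rabs_left; lra.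
  - intros H [e He]. destruct (H e He) as [d [Hd0 Hd]]. exists (mkposreal d Hd0).
    intros u Hu Htu. change (Rabs (u - t) < d) in Hu. apply Rabs_def2 in Hu.
    apply (Hd u). lra.
Qed.

Lemma cadlag_iff x : cadlag x <->
  (forall t, 0 <= t < 1 -> is_right_cont x t) /\
  (forall t, 0 < t <= 1 -> exists l, is_left_lim x t l).
Proof.
  unfold cadlag. split; intros [Hr Hl]; split.
  - intros t Ht. apply filterlim_at_right_iff. auto.
  - intros t Ht. destruct (Hl t Ht) as [l Hlim]. exists l. now apply filterlim_at_left_iff.
  - intros t Ht. apply filterlim_at_right_iff. auto.
  - intros t Ht. destruct (Hl t Ht) as [l Hlim]. exists l. now apply filterlim_at_left_iff.
Qed.

Lemma cadlag_left_lim x t : cadlag x -> 0 < t <= 1 -> exists l, is_left_lim x t l.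
Proof. intros Hx Ht. apply cadlag_iff in Hx. now apply Hx. Qed.

Lemma cadlag_opp x : cadlag x -> cadlag (opp x).
Proof.
  rewrite !cadlag_iff. unfold opp. intros [Hr Hl]. split.
  - intros t Ht e He. destruct (Hr t Ht e He) as [d [Hd Hd']]. exists d. split; auto.
    intros u Hu. replace (- x u - - x t) with (- (x u - x t)) by ring.
    rewrite Rabs_Ropp. auto.
  - intros t Ht. destruct (Hl t Ht) as [l Hlim]. exists (- l). intros e He.
    destruct (Hlim e He) as [d [Hd Hd']]. exists d. split; auto.
    intros u Hu. replace (- x u - - l) with (- (x u - l)) by ring. rewrite Rabs_Ropp. auto.
Qed.

Lemma cadlag_plus x y : cadlag x -> cadlag y -> cadlag (fun t => x t + y t).
Proof.
  rewrite !cadlag_iff. intros [X1 X2] [Y1 Y2]. split.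
  - intros t Ht e He. destruct (X1 t Ht (e/2) ltac:(lra)) as [d1 [Hd1 H1]].
    destruct (Y1 t Ht (e/2) ltac:(lra)) as [d2 [Hd2 H2]].
    exists (Rmin d1 d2). split; [now apply Rmin_glb_lt|]. intros u Hu.
    pose proof (Rmin_l d1 d2). pose proof (Rmin_r d1 d2).
    specialize (H1 u ltac:(lra)). specialize (H2 u ltac:(lra)).
    apply Rabs_def2 in H1. apply Rabs_def2 in H2. apply Rabs_def1; lra.
  - intros t Ht. destruct (X2 t Ht) as [l1 L1]. destruct (Y2 t Ht) as [l2 L2].
    exists (l1 + l2). intros e He.
    destruct (L1 (e/2) ltac:(lra)) as [d1 [Hd1 H1]].
    destruct (L2 (e/2) ltac:(lra)) as [d2 [Hd2 H2]].
    exists (Rmin d1 d2). split; [now apply Rmin_glb_lt|]. intros u Hu.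
    pose proof (Rmin_l d1 d2). pose proof (Rmin_r d1 d2).
    specialize (H1 u ltac:(lra)). specialize (H2 u ltac:(lra)).
    apply Rabs_def2 in H1. apply Rabs_def2 in H2. apply Rabs_def1; lra.
Qed.

Lemma cadlag_const c : cadlag (fun _ => c).
Proof.
  apply cadlag_iff. split.
  - intros t _ e He. exists 1. split; [lra|]. intros. rewrite Rminus_eq_0, Rabs_R0. lra.
  - intros t _. exists c. intros e He. exists 1. split; [lra|].
    intros. rewrite Rminus_eq_0, Rabs_R0. lra.
Qed.

Definition bounded01 (f : R -> R) := exists B, forall s, I01 s -> Rabs (f s) <= B.

Lemma cadlag_locally_bounded x : cadlag x -> forall t, I01 t ->
  exists d B, 0 < d /\ forall s, I01 s -> Rabs (s - t) < d -> Rabs (x s) <= B.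
Proof.
  intros Hx t Ht. apply cadlag_iff in Hx. destruct Hx as [Hr Hl]. unfold I01 in *.
  assert (Right : exists d1, 0 < d1 /\
    forall s, t < s < t + d1 -> s <= 1 -> Rabs (x s) <= Rabs (x t) + 1).
  { destruct (Rlt_le_dec t 1) as [Ht1|Ht1].
    - destruct (Hr t (conj (proj1 Ht) Ht1) 1 Rlt_0_1) as [d [Hd Hd']]. exists d. split; auto.
      intros s Hs _. specialize (Hd' s Hs). pose proof (Rabs_triang_inv (x s) (x t)). lra.
    - exists 1. split; [lra|]. intros. lra. }
  assert (Left : exists d2 l, 0 < d2 /\
    forall s, t - d2 < s < t -> 0 <= s -> Rabs (x s) <= Rabs l + 1).
  { destruct (Rle_lt_dec t 0) as [Ht0|Ht0].
    - exists 1, 0. split; [lra|]. intros. lra.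
    - destruct (Hl t (conj Ht0 (proj2 Ht))) as [l Hlim].
      destruct (Hlim 1 Rlt_0_1) as [d [Hd Hd']]. exists d, l. split; auto.
      intros s Hs _. specialize (Hd' s Hs). pose proof (Rabs_triang_inv (x s) l). lra. }
  destruct Right as [d1 [Hd1 Right]]. destruct Left as [d2 [l [Hd2 Left]]].
  exists (Rmin d1 d2), (Rabs (x t) + 1 + Rabs l + 1). split; [now apply Rmin_glb_lt|].
  intros s Hs Hst. apply Rabs_def2 in Hst. pose proof (Rmin_l d1 d2). pose proof (Rmin_r d1 d2).
  pose proof (Rabs_pos l). pose proof (Rabs_pos (x t)).
  destruct (Rtotal_order s t) as [Hlt|[Heq|Hgt]].
  - specialize (Left s ltac:(lra) ltac:(lra)). lra.
  - subst. lra.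
  - specialize (Right s ltac:(lra) ltac:(lra)). lra.
Qed.

(* The supremum c of the t such that x is bounded on [0,t] is reached and equals
   1, because x is bounded on a neighbourhood of c. *)
Lemma cadlag_bounded x : cadlag x -> bounded01 x.
Proof.
  intros Hx.
  set (A := fun t => 0 <= t <= 1 /\ exists B, forall s, 0 <= s <= t -> Rabs (x s) <= B).
  assert (HA0 : A 0).
  { split; [lra|]. exists (Rabs (x 0)). intros s Hs. replace s with 0 by lra. lra. }
  assert (Hbound : bound A) by (exists 1; intros t [Ht _]; lra).
  destruct (completeness A Hbound (ex_intro _ 0 HA0)) as [c [Hc_ub Hc_lub]].
  assert (Hc0 : 0 <= c) by (apply Hc_ub; auto).
  assert (Hc1 : c <= 1) by (apply Hc_lub; intros t [Ht _]; lra).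
  destruct (cadlag_locally_bounded x Hx c (conj Hc0 Hc1)) as [d [Bc [Hd HBc]]].
  assert (Ha : exists a, A a /\ c - d < a).
  { apply NNPP. intro Hn. enough (c <= c - d) by lra. apply Hc_lub. intros a Ha.
    destruct (Rle_lt_dec a (c - d)); auto. exfalso. apply Hn. exists a; auto. }
  destruct Ha as [a [[Ha01 [Ba HBa]] Hac]].
  assert (Hac' : a <= c) by (apply Hc_ub; split; auto; exists Ba; auto).
  set (c' := Rmin (c + d/2) 1).
  assert (Hc'_le : c' <= c + d/2 /\ c' <= 1) by (split; [apply Rmin_l|apply Rmin_r]).
  assert (Hc'_ge : 0 <= c') by (apply Rmin_glb; lra).
  assert (HAc' : A c').
  { split; [lra|].
    exists (Rmax Ba Bc). intros s Hs.
    destruct (Rle_lt_dec s a) as [Hsa|Hsa].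
    - eapply Rle_trans; [apply HBa; lra|apply Rmax_l].
    - eapply Rle_trans; [|apply Rmax_r]. apply HBc; [unfold I01; lra|].
      apply Rabs_def1; lra. }
  assert (Hc'1 : c' = 1).
  { assert (c' <= c) by (apply Hc_ub; auto).
    unfold c' in *. destruct (Rle_lt_dec (c + d/2) 1).
    - rewrite Rmin_left in *; lra.
    - rewrite Rmin_right; lra. }
  rewrite Hc'1 in HAc'. destruct HAc' as [_ [B HB]]. exists B. exact HB.
Qed.

(** * Left limits and jumps *)

Lemma inv_INR_S_lt d : 0 < d -> exists N, forall n, (N <= n)%nat -> 0 < / INR (S n) < d.
Proof.
  intros Hd. destruct (archimed (/ d)) as [Hup _].
  assert (Hp : (0 < up (/ d))%Z).
  { apply lt_0_IZR. pose proof (Rinv_0_lt_compat d Hd). lra. }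
  exists (Z.to_nat (up (/ d))). intros n Hn.
  assert (HI : / d < INR (S n)).
  { rewrite INR_IZR_INZ. eapply Rlt_le_trans; [apply Hup|]. apply IZR_le.
    rewrite <- (Znat.Z2Nat.id (up (/d))) by lia. apply Znat.Nat2Z.inj_le. lia. }
  pose proof (Rinv_0_lt_compat d Hd).
  split; [apply Rinv_0_lt_compat; lra|].
  rewrite <- (Rinv_inv d). apply Rinv_lt_contravar; [apply Rmult_lt_0_compat; lra|exact HI].
Qed.

Lemma is_left_lim_seq x t l : is_left_lim x t l ->
  is_lim_seq (fun n => x (t - / INR (S n))) l.
Proof.
  intros H. apply is_lim_seq_spec. intros [e He].
  destruct (H e He) as [d [Hd Hd']]. destruct (inv_INR_S_lt d Hd) as [N HN].
  exists N. intros n Hn. specialize (HN n Hn). apply Hd'. lra.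
Qed.

Lemma leftlim_is_left_lim x t l : is_left_lim x t l -> leftlim x t = l.
Proof.
  intros H. unfold leftlim. now rewrite (is_lim_seq_unique _ _ (is_left_lim_seq x t l H)).
Qed.

Lemma is_left_lim_dist x y t lx ly e : 0 < t <= 1 ->
  is_left_lim x t lx -> is_left_lim y t ly ->
  (forall s, I01 s -> Rabs (x s - y s) <= e) -> Rabs (lx - ly) <= e.
Proof.
  intros Ht Hx Hy Hxy.
  pose proof (is_lim_seq_abs _ _
    (is_lim_seq_minus' _ _ _ _ (is_left_lim_seq x t lx Hx) (is_left_lim_seq y t ly Hy))) as Hl.
  assert (Hev : eventually (fun n => Rabs (x (t - / INR (S n)) - y (t - / INR (S n))) <= e)).
  { destruct (inv_INR_S_lt t ltac:(lra)) as [N HN]. exists N. intros n Hn.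
    specialize (HN n Hn). apply Hxy. unfold I01. lra. }
  exact (is_lim_seq_le_loc _ (fun _ => e) _ e Hev Hl (is_lim_seq_const e)).
Qed.

Lemma Delta_0 x : Delta x 0 = 0.
Proof. unfold Delta. destruct (Rle_dec 0 0); [auto|lra]. Qed.

Lemma Delta_is_left_lim x t l : 0 < t -> is_left_lim x t l -> Delta x t = x t - l.
Proof.
  intros Ht H. unfold Delta. destruct (Rle_dec t 0); [lra|].
  now rewrite (leftlim_is_left_lim x t l H).
Qed.

Lemma Delta_lipschitz x y e : cadlag x -> cadlag y ->
  (forall s, I01 s -> Rabs (x s - y s) <= e) ->
  forall t, I01 t -> Rabs (Delta x t - Delta y t) <= 2 * e.
Proof.
  intros Hx Hy Hxy t Ht.
  assert (He : 0 <= e) by (eapply Rle_trans; [apply Rabs_pos|apply (Hxy 0); unfold I01; lra]).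
  destruct (Rle_lt_dec t 0) as [Ht0|Ht0].
  - replace t with 0 by (unfold I01 in Ht; lra).
    rewrite !Delta_0, Rminus_0_r, Rabs_R0. lra.
  - destruct (cadlag_left_lim x t Hx (conj Ht0 (proj2 Ht))) as [lx Hlx].
    destruct (cadlag_left_lim y t Hy (conj Ht0 (proj2 Ht))) as [ly Hly].
    rewrite (Delta_is_left_lim x t lx Ht0 Hlx), (Delta_is_left_lim y t ly Ht0 Hly).
    pose proof (is_left_lim_dist x y t lx ly e (conj Ht0 (proj2 Ht)) Hlx Hly Hxy).
    pose proof (Hxy t Ht).
    replace (x t - lx - (y t - ly)) with ((x t - y t) - (lx - ly)) by ring.
    eapply Rle_trans; [apply Rabs_triang|]. rewrite Rabs_Ropp. lra.
Qed.

Lemma Delta_const c t : Delta (fun _ => c) t = 0.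
Proof.
  unfold Delta. destruct (Rle_dec t 0); [auto|].
  unfold leftlim. rewrite Lim_seq_const. simpl. ring.
Qed.

Lemma Delta_bounded x : cadlag x -> bounded01 (Delta x).
Proof.
  intros Hx. destruct (cadlag_bounded x Hx) as [B HB]. exists (2 * B). intros s Hs.
  pose proof (Delta_lipschitz x (fun _ => 0) B Hx (cadlag_const 0)) as H.
  specialize (H ltac:(intros u Hu; rewrite Rminus_0_r; auto) s Hs).
  now rewrite Delta_const, Rminus_0_r in H.
Qed.

Lemma Delta_local x y s : (forall t, I01 t -> x t = y t) -> I01 s -> Delta x s = Delta y s.
Proof.
  intros H Hs. unfold Delta. destruct (Rle_dec s 0) as [|Hs0]; auto.
  rewrite (H s Hs). f_equal. unfold leftlim. f_equal. apply Lim_seq_ext_loc.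
  destruct (inv_INR_S_lt s ltac:(lra)) as [N HN]. exists N. intros n Hn.
  specialize (HN n Hn). apply H. unfold I01 in *. lra.
Qed.

(* Both x(s) and x(s-) are close to x(tau) for s just right of tau. *)
Lemma Delta_small_right x : cadlag x -> forall tau, 0 <= tau < 1 -> forall e, 0 < e ->
  exists h, 0 < h /\ forall s, tau < s < tau + h -> s <= 1 -> Rabs (Delta x s) <= e.
Proof.
  intros Hx tau Htau e He. pose proof Hx as Hx'. apply cadlag_iff in Hx'.
  destruct (proj1 Hx' tau Htau (e/4) ltac:(lra)) as [d [Hd Hd']]. exists d. split; auto.
  intros s Hs Hs1. destruct (cadlag_left_lim x s Hx ltac:(lra)) as [l Hl].
  rewrite (Delta_is_left_lim x s l ltac:(lra) Hl).
  destruct (Hl (e/4) ltac:(lra)) as [d2 [Hd2 Hd2']].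
  set (u := (Rmax tau (s - d2) + s) / 2).
  pose proof (Rmax_l tau (s - d2)). pose proof (Rmax_r tau (s - d2)).
  pose proof (Rmax_lub_lt tau (s - d2) s ltac:(lra) ltac:(lra)).
  assert (Hu : tau < u < s /\ s - d2 < u) by (unfold u; lra).
  pose proof (Hd' s ltac:(lra)) as A1. pose proof (Hd' u ltac:(lra)) as A2.
  pose proof (Hd2' u ltac:(lra)) as A3.
  apply Rabs_def2 in A1. apply Rabs_def2 in A2. apply Rabs_def2 in A3. apply Rabs_le. lra.
Qed.

(** * Time changes *)

Lemma Lambda_cont l : in_Lambda l -> forall t, I01 t -> forall e, 0 < e -> exists d, 0 < d /\
  forall u, I01 u -> Rabs (u - t) < d -> Rabs (l u - l t) < e.
Proof.
  intros [Hc _] t Ht e He. specialize (Hc t Ht). rewrite filterlim_locally in Hc.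
  destruct (Hc (mkposreal e He)) as [d Hd]. exists d. split; [apply cond_pos|].
  intros u Hu Hut. exact (Hd u Hut Hu).
Qed.

Lemma Lambda_lt l u t : in_Lambda l -> I01 u -> I01 t -> u < t -> l u < l t.
Proof. intros [_ [Hm _]]. auto. Qed.

Lemma Lambda_le l u t : in_Lambda l -> I01 u -> I01 t -> u <= t -> l u <= l t.
Proof.
  intros Hl Hu Ht H. destruct (Rle_lt_or_eq_dec u t H) as [Hlt|Heq].
  - left. now apply Lambda_lt.
  - subst. lra.
Qed.

Lemma Lambda_le_inv l u t : in_Lambda l -> I01 u -> I01 t -> l u <= l t -> u <= t.
Proof.
  intros Hl Hu Ht H. destruct (Rle_lt_dec u t) as [|Htu]; auto.
  pose proof (Lambda_lt l t u Hl Ht Hu Htu). lra.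
Qed.

Lemma Lambda_I01 l t : in_Lambda l -> I01 t -> I01 (l t).
Proof.
  intros Hl Ht. pose proof Hl as [_ [_ [Hl0 Hl1]]]. unfold I01 in *. split.
  - rewrite <- Hl0. apply Lambda_le; unfold I01; auto; lra.
  - rewrite <- Hl1. apply Lambda_le; unfold I01; auto; lra.
Qed.

Definition clamp01 t := Rmax 0 (Rmin t 1).

Lemma clamp01_I01 t : I01 (clamp01 t).
Proof. unfold clamp01, I01. split; [apply Rmax_l|]. apply Rmax_lub; [lra|apply Rmin_r]. Qed.

Lemma clamp01_id t : I01 t -> clamp01 t = t.
Proof. unfold clamp01, I01. intros. rewrite Rmin_left by lra. rewrite Rmax_right; lra. Qed.

Lemma clamp01_dist u t : Rabs (clamp01 u - clamp01 t) <= Rabs (u - t).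
Proof.
  unfold clamp01, Rmax, Rmin.
  repeat destruct Rle_dec; unfold Rabs; repeat destruct Rcase_abs; lra.
Qed.

(* l o clamp01 is continuous on all of R, so the intermediate value theorem applies. *)
Lemma Lambda_surj l v : in_Lambda l -> I01 v -> exists t, I01 t /\ l t = v.
Proof.
  intros Hl Hv. pose proof Hl as [_ [_ [Hl0 Hl1]]].
  set (lc := fun t => l (clamp01 t)).
  assert (Hc : continuity lc).
  { intros t. unfold continuity_pt, continue_in, limit1_in, limit_in. simpl. unfold R_dist.
    intros e He.
    destruct (Lambda_cont l Hl (clamp01 t) (clamp01_I01 t) e He) as [d [Hd Hd']].
    exists d. split; auto. intros u [_ Hu]. apply Hd'; [apply clamp01_I01|].
    eapply Rle_lt_trans; [apply clamp01_dist|auto]. }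
  assert (Hlc0 : lc 0 = 0) by (unfold lc; rewrite clamp01_id; auto; unfold I01; lra).
  assert (Hlc1 : lc 1 = 1) by (unfold lc; rewrite clamp01_id; auto; unfold I01; lra).
  destruct (IVT_gen lc 0 1 v Hc) as [t [Ht Hlt]].
  { rewrite Hlc0, Hlc1, Rmin_left, Rmax_right by lra. exact Hv. }
  rewrite Rmin_left, Rmax_right in Ht by lra.
  exists t. split; auto. unfold lc in Hlt. now rewrite clamp01_id in Hlt.
Qed.

Lemma is_left_lim_comp x l s L : in_Lambda l -> 0 < s <= 1 ->
  is_left_lim x (l s) L -> is_left_lim (fun u => x (l u)) s L.
Proof.
  intros Hl Hs HL e He. destruct (HL e He) as [d [Hd Hd']].
  destruct (Lambda_cont l Hl s ltac:(unfold I01; lra) d Hd) as [d1 [Hd1 Hd1']].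
  exists (Rmin d1 s). split; [apply Rmin_glb_lt; lra|]. intros u Hu.
  pose proof (Rmin_l d1 s). pose proof (Rmin_r d1 s).
  assert (Hu01 : I01 u) by (unfold I01; lra).
  apply Hd'. specialize (Hd1' u Hu01 ltac:(apply Rabs_def1; lra)).
  pose proof (Lambda_lt l u s Hl Hu01 ltac:(unfold I01; lra) ltac:(lra)).
  apply Rabs_def2 in Hd1'. lra.
Qed.

Lemma cadlag_comp x l : cadlag x -> in_Lambda l -> cadlag (fun u => x (l u)).
Proof.
  intros Hx Hl. pose proof Hl as [_ [_ [Hl0 Hl1]]].
  apply cadlag_iff in Hx. destruct Hx as [Hr Hlft]. apply cadlag_iff. split.
  - intros t Ht e He. assert (Ht' : I01 t) by (unfold I01; lra).
    pose proof (Lambda_I01 l t Hl Ht') as Hlt.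
    assert (Hlt1 : l t < 1) by (rewrite <- Hl1; apply Lambda_lt; unfold I01 in *; auto; lra).
    destruct (Hr (l t) ltac:(unfold I01 in Hlt; lra) e He) as [d [Hd Hd']].
    destruct (Lambda_cont l Hl t Ht' d Hd) as [d1 [Hd1 Hd1']].
    exists (Rmin d1 (1 - t)). split; [apply Rmin_glb_lt; lra|]. intros u Hu.
    pose proof (Rmin_l d1 (1 - t)). pose proof (Rmin_r d1 (1 - t)).
    assert (Hu01 : I01 u) by (unfold I01; lra).
    apply Hd'. specialize (Hd1' u Hu01 ltac:(apply Rabs_def1; lra)).
    pose proof (Lambda_lt l t u Hl Ht' Hu01 ltac:(lra)).
    apply Rabs_def2 in Hd1'. lra.
  - intros t Ht. assert (Ht' : I01 t) by (unfold I01; lra).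
    assert (Hlt0 : 0 < l t) by (rewrite <- Hl0; apply Lambda_lt; unfold I01 in *; auto; lra).
    pose proof (Lambda_I01 l t Hl Ht') as Hlt.
    destruct (Hlft (l t) ltac:(unfold I01 in Hlt; lra)) as [L HL]. exists L.
    now apply is_left_lim_comp.
Qed.

Lemma Delta_comp x l s : cadlag x -> in_Lambda l -> I01 s ->
  Delta x (l s) = Delta (fun u => x (l u)) s.
Proof.
  intros Hx Hl Hs. pose proof Hl as [_ [_ [Hl0 _]]].
  destruct (Rle_lt_dec s 0) as [Hs0|Hs0].
  - replace s with 0 by (unfold I01 in Hs; lra). now rewrite Hl0, !Delta_0.
  - assert (Hls0 : 0 < l s) by (rewrite <- Hl0; apply Lambda_lt; unfold I01 in *; auto; lra).
    pose proof (Lambda_I01 l s Hl Hs) as Hls.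
    destruct (cadlag_left_lim x (l s) Hx ltac:(unfold I01 in Hls; lra)) as [L HL].
    rewrite (Delta_is_left_lim x (l s) L Hls0 HL).
    rewrite (Delta_is_left_lim _ s L Hs0 (is_left_lim_comp x l s L Hl
               ltac:(unfold I01 in Hs; lra) HL)).
    reflexivity.
Qed.

(** * Running suprema *)

Lemma supOn_ge f s t : bounded01 f -> 0 <= s <= t -> t <= 1 -> f s <= supOn f t.
Proof.
  intros [B HB] Hs Ht. apply Lub_Rbar_real_ub; [|exists s; auto].
  exists B. intros w [u [Hu ->]]. eapply Rle_trans; [apply Rle_abs|]. apply HB. unfold I01; lra.
Qed.

Lemma supOn_le f t B : 0 <= t -> (forall s, 0 <= s <= t -> f s <= B) -> supOn f t <= B.
Proof.
  intros Ht H. apply Lub_Rbar_real_le.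
  - exists (f 0), 0. split; auto. lra.
  - intros w [u [Hu ->]]. auto.
Qed.

Lemma supOn_mono f t1 t2 : bounded01 f -> 0 <= t1 <= t2 -> t2 <= 1 ->
  supOn f t1 <= supOn f t2.
Proof. intros Hf H1 H2. apply supOn_le; [lra|]. intros s Hs. apply supOn_ge; auto. lra. Qed.

Lemma supOn_bounded f : bounded01 f -> bounded01 (supOn f).
Proof.
  intros Hf. pose proof Hf as [B HB]. exists B. intros t Ht. unfold I01 in Ht.
  apply Rabs_le. split.
  - pose proof (supOn_ge f 0 t Hf ltac:(lra) ltac:(lra)).
    pose proof (HB 0 ltac:(unfold I01; lra)) as Hf0. apply Rabs_le_between in Hf0. lra.
  - apply supOn_le; [lra|]. intros s Hs.
    pose proof (HB s ltac:(unfold I01; lra)) as Hfs. apply Rabs_le_between in Hfs. lra.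
Qed.

Lemma supOn_lipschitz f g e t : bounded01 f -> bounded01 g ->
  (forall s, I01 s -> Rabs (f s - g s) <= e) -> I01 t -> Rabs (supOn f t - supOn g t) <= e.
Proof.
  intros Hf Hg H Ht. unfold I01 in Ht.
  assert (Hle : forall f g, bounded01 g -> (forall s, I01 s -> Rabs (f s - g s) <= e) ->
            supOn f t <= supOn g t + e).
  { intros f' g' Hg' H'. apply supOn_le; [lra|]. intros s Hs.
    pose proof (supOn_ge g' s t Hg' Hs ltac:(lra)).
    pose proof (H' s ltac:(unfold I01; lra)) as Hs'. apply Rabs_le_between in Hs'. lra. }
  pose proof (Hle f g Hg H).
  assert (supOn g t <= supOn f t + e).
  { apply Hle; auto. intros s Hs. rewrite Rabs_minus_sym. auto. }
  apply Rabs_le. lra.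
Qed.

Lemma supOn_ext f g t : (forall s, 0 <= s <= t -> f s = g s) -> supOn f t = supOn g t.
Proof.
  intros H. unfold supOn. f_equal. apply Lub_Rbar_eqset. intros v.
  split; intros [s [Hs ->]]; exists s; split; auto. symmetry; auto.
Qed.

Lemma supOn_comp f l t : in_Lambda l -> I01 t ->
  supOn f (l t) = supOn (fun u => f (l u)) t.
Proof.
  intros Hl Ht. unfold supOn. f_equal. apply Lub_Rbar_eqset. intros v. split.
  - intros [s [Hs ->]]. pose proof (Lambda_I01 l t Hl Ht) as Hlt. unfold I01 in *.
    destruct (Lambda_surj l s Hl ltac:(unfold I01; lra)) as [u [Hu Hus]].
    exists u. split; [|now rewrite Hus]. split; [apply Hu|].
    apply (Lambda_le_inv l u t Hl Hu Ht). lra.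
  - intros [u [Hu ->]]. exists (l u). split; auto.
    assert (Hu01 : I01 u) by (unfold I01 in *; lra).
    split; [apply (Lambda_I01 l u Hl Hu01)|]. apply Lambda_le; auto. apply Hu.
Qed.

(* Right continuity: f is at most e just right of tau, while sup f >= f 0 >= 0.
   Left limits: the running supremum is nondecreasing. *)
Lemma supOn_cadlag f : bounded01 f -> 0 <= f 0 ->
  (forall tau, 0 <= tau < 1 -> forall e, 0 < e -> exists h, 0 < h /\
     forall s, tau < s < tau + h -> s <= 1 -> f s <= e) ->
  cadlag (supOn f).
Proof.
  intros Hb Hf0 Hright. apply cadlag_iff. split.
  - intros tau Htau e He. destruct (Hright tau Htau (e/2) ltac:(lra)) as [h [Hh Hh']].
    exists (Rmin h (1 - tau)). split; [apply Rmin_glb_lt; lra|].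
    intros u Hu. pose proof (Rmin_l h (1 - tau)). pose proof (Rmin_r h (1 - tau)).
    assert (A1 : supOn f tau <= supOn f u) by (apply supOn_mono; auto; lra).
    assert (A0 : f 0 <= supOn f tau) by (apply supOn_ge; auto; lra).
    assert (A2 : supOn f u <= supOn f tau + e/2).
    { apply supOn_le; [lra|]. intros s Hs. destruct (Rle_lt_dec s tau).
      - pose proof (supOn_ge f s tau Hb ltac:(lra) ltac:(lra)). lra.
      - pose proof (Hh' s ltac:(lra) ltac:(lra)). lra. }
    apply Rabs_def1; lra.
  - intros t Ht. set (E := fun v => exists s, 0 <= s < t /\ v = supOn f s).
    assert (EB : forall w, E w -> w <= supOn f t).
    { intros w [s [Hs ->]]. apply supOn_mono; auto; lra. }
    exists (real (Lub_Rbar E)). intros e He.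
    assert (Hex : exists s0, 0 <= s0 < t /\ real (Lub_Rbar E) - e < supOn f s0).
    { apply NNPP. intro Hn.
      enough (real (Lub_Rbar E) <= real (Lub_Rbar E) - e) by lra.
      apply Lub_Rbar_real_le; [exists (supOn f 0), 0; split; auto; lra|].
      intros w [s [Hs ->]]. apply Rnot_lt_le. intro Hlt. apply Hn. exists s. auto. }
    destruct Hex as [s0 [Hs0 Hs0']]. exists (t - s0). split; [lra|].
    intros u Hu. assert (supOn f s0 <= supOn f u) by (apply supOn_mono; auto; lra).
    assert (supOn f u <= real (Lub_Rbar E)).
    { apply Lub_Rbar_real_ub; [exists (supOn f t); auto|]. exists u. split; auto. lra. }
    apply Rabs_def1; lra.
Qed.

Lemma cadlag_S_Delta x : cadlag x -> cadlag (S_Delta x).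
Proof.
  intros Hx. apply supOn_cadlag; [now apply Delta_bounded|rewrite Delta_0; lra|].
  intros tau Htau e He. destruct (Delta_small_right x Hx tau Htau e He) as [h [Hh Hh']].
  exists h. split; auto. intros s Hs Hs1. apply Rabs_le_between. auto.
Qed.

Lemma cadlag_S_Delta_abs x : cadlag x -> cadlag (S_Delta_abs x).
Proof.
  intros Hx. apply supOn_cadlag.
  - destruct (Delta_bounded x Hx) as [B HB]. exists B. intros s Hs. rewrite Rabs_Rabsolu. auto.
  - apply Rabs_pos.
  - apply Delta_small_right. exact Hx.
Qed.

(** * Admissible operators *)

Definition pointwise_lipschitz (P : (R -> R) -> (R -> R)) (K : R) :=
  forall x y e, cadlag x -> cadlag y -> (forall s, I01 s -> Rabs (x s - y s) <= e) ->
  forall t, I01 t -> Rabs (P x t - P y t) <= K * e.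

Definition local (P : (R -> R) -> (R -> R)) :=
  forall x y, (forall t, I01 t -> x t = y t) -> forall t, I01 t -> P x t = P y t.

Definition preserves_cadlag (P : (R -> R) -> (R -> R)) := forall x, cadlag x -> cadlag (P x).

Record admissible (P : (R -> R) -> (R -> R)) (K : R) : Prop := {
  admissible_K : 0 <= K;
  admissible_lipschitz : pointwise_lipschitz P K;
  admissible_compat : Lambda_compatible P;
  admissible_local : local P;
  admissible_bounded : forall x, cadlag x -> bounded01 (P x) }.

Lemma admissible_id : admissible (fun x => x) 1.
Proof.
  split.
  - lra.
  - intros x y e _ _ H t Ht. rewrite Rmult_1_l. auto.
  - intros x l _ _ t _. reflexivity.
  - intros x y H t Ht. auto.
  - exact cadlag_bounded.
Qed.

Lemma admissible_Delta : admissible Delta 2.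
Proof.
  split.
  - lra.
  - exact Delta_lipschitz.
  - intros x l Hx Hl t Ht. now apply Delta_comp.
  - intros x y H t Ht. now apply Delta_local.
  - exact Delta_bounded.
Qed.

Lemma admissible_abs P K : admissible P K -> admissible (fun x s => Rabs (P x s)) K.
Proof.
  intros [HK HPL HC HL HB]. split; auto.
  - intros x y e Hx Hy H t Ht. eapply Rle_trans; [apply Rabs_triang_inv2|]. auto.
  - intros x l Hx Hl t Ht. now rewrite HC.
  - intros x y H t Ht. now rewrite (HL x y H).
  - intros x Hx. destruct (HB x Hx) as [B HB']. exists B. intros s Hs.
    rewrite Rabs_Rabsolu. auto.
Qed.

Lemma admissible_opp P K : admissible P K -> admissible (fun x s => - P x s) K.
Proof.
  intros [HK HPL HC HL HB]. split; auto.
  - intros x y e Hx Hy H t Ht. replace (- P x t - - P y t) with (- (P x t - P y t)) by ring.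
    rewrite Rabs_Ropp. auto.
  - intros x l Hx Hl t Ht. now rewrite HC.
  - intros x y H t Ht. now rewrite (HL x y H).
  - intros x Hx. destruct (HB x Hx) as [B HB']. exists B. intros s Hs.
    rewrite Rabs_Ropp. auto.
Qed.

Lemma admissible_plus P Q K K' : admissible P K -> admissible Q K' ->
  admissible (fun x s => P x s + Q x s) (K + K').
Proof.
  intros [HK HPL HC HL HB] [HK' HQL HC' HL' HB']. split.
  - lra.
  - intros x y e Hx Hy H t Ht.
    replace (P x t + Q x t - (P y t + Q y t)) with ((P x t - P y t) + (Q x t - Q y t)) by ring.
    eapply Rle_trans; [apply Rabs_triang|]. rewrite Rmult_plus_distr_r.
    apply Rplus_le_compat; auto.
  - intros x l Hx Hl t Ht. now rewrite HC, HC'.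
  - intros x y H t Ht. now rewrite (HL x y H), (HL' x y H).
  - intros x Hx. destruct (HB x Hx) as [B1 H1]. destruct (HB' x Hx) as [B2 H2].
    exists (B1 + B2). intros s Hs. eapply Rle_trans; [apply Rabs_triang|].
    apply Rplus_le_compat; auto.
Qed.

Lemma admissible_supOn P K : admissible P K -> admissible (fun x => supOn (P x)) K.
Proof.
  intros [HK HPL HC HL HB]. split; auto.
  - intros x y e Hx Hy H t Ht. apply supOn_lipschitz; auto.
  - intros x l Hx Hl t Ht. rewrite supOn_comp by auto. apply supOn_ext.
    intros s Hs. apply HC; auto. unfold I01 in *; lra.
  - intros x y H t Ht. apply supOn_ext. intros s Hs. apply HL; auto. unfold I01 in *; lra.
  - intros x Hx. apply supOn_bounded. auto.
Qed.

(* Compatibility of P o Q uses locality of P: Q x o l and Q (x o l) agree on [0,1] only. *)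
Lemma admissible_comp P Q K K' : admissible P K -> admissible Q K' -> preserves_cadlag Q ->
  admissible (fun x => P (Q x)) (K * K').
Proof.
  intros [HK HPL HC HL HB] [HK' HQL HC' HL' HB'] HQ. split.
  - now apply Rmult_le_pos.
  - intros x y e Hx Hy H t Ht. rewrite Rmult_assoc. apply HPL; auto.
  - intros x l Hx Hl t Ht. rewrite HC by auto. apply HL; [|exact Ht].
    intros s Hs. apply HC'; auto.
  - intros x y H t Ht. apply HL; auto.
  - intros x Hx. auto.
Qed.

Lemma preserves_cadlag_iter F r : preserves_cadlag F ->
  preserves_cadlag (fun x => Nat.iter r F x).
Proof. intros HF x Hx. induction r as [|r IH]; simpl; auto. Qed.

Lemma admissible_iter F K r : admissible F K -> preserves_cadlag F ->
  admissible (fun x => Nat.iter r F x) (K ^ r).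
Proof.
  intros HF HFc. induction r as [|r IH].
  - exact admissible_id.
  - exact (admissible_comp F _ K (K ^ r) HF IH (preserves_cadlag_iter F r HFc)).
Qed.

(** * The operators of the family *)

Lemma admissible_pm b : admissible (pm b) 1.
Proof. destruct b; [exact admissible_id|exact (admissible_opp _ _ admissible_id)]. Qed.

Lemma cadlag_pm b x : cadlag x -> cadlag (pm b x).
Proof. destruct b; [auto|apply cadlag_opp]. Qed.

Lemma admissible_S_pmDelta b : admissible (S_pmDelta b) 2.
Proof.
  replace 2 with (2 * 1) by ring.
  exact (admissible_comp _ _ _ _ (admissible_supOn _ _ admissible_Delta) (admissible_pm b)
           (cadlag_pm b)).
Qed.

Lemma admissible_T1_rim b : admissible (T1_rim b) 3.
Proof.
  replace 3 with (1 + 2) by ring.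
  destruct b.
  - exact (admissible_plus _ _ _ _ admissible_id (admissible_opp _ _ (admissible_S_pmDelta true))).
  - exact (admissible_plus _ _ _ _ admissible_id (admissible_S_pmDelta false)).
Qed.

Lemma cadlag_T1_rim b : preserves_cadlag (T1_rim b).
Proof.
  intros x Hx. pose proof (cadlag_S_Delta _ (cadlag_pm b x Hx)) as HS. destruct b.
  - exact (cadlag_plus _ _ Hx (cadlag_opp _ HS)).
  - exact (cadlag_plus _ _ Hx HS).
Qed.

Lemma admissible_Tt1_rim : admissible Tt1_rim 3.
Proof.
  replace 3 with (1 + 2) by ring.
  exact (admissible_plus _ _ _ _ admissible_id
           (admissible_opp _ _ (admissible_supOn _ _ (admissible_abs _ _ admissible_Delta)))).
Qed.

Lemma cadlag_Tt1_rim : preserves_cadlag Tt1_rim.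
Proof. intros x Hx. exact (cadlag_plus _ _ Hx (cadlag_opp _ (cadlag_S_Delta_abs x Hx))). Qed.

Lemma in_family_admissible P : in_family P -> exists K, admissible P K.
Proof.
  pose proof (fun r b => admissible_iter _ _ r (admissible_T1_rim b) (cadlag_T1_rim b)) as HT.
  pose proof (fun r b => preserves_cadlag_iter _ r (cadlag_T1_rim b)) as HTc.
  pose proof (fun r => admissible_iter _ _ r admissible_Tt1_rim cadlag_Tt1_rim) as HTt.
  pose proof (fun r => preserves_cadlag_iter _ r cadlag_Tt1_rim) as HTtc.
  intros [| | | | |r b _|r b _|r s _ _|r _|r _]; eexists.
  - exact (admissible_supOn _ _ admissible_id).
  - exact (admissible_supOn _ _ (admissible_abs _ _ admissible_id)).
  - exact (admissible_S_pmDelta true).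
  - exact (admissible_S_pmDelta false).
  - exact (admissible_supOn _ _ (admissible_abs _ _ admissible_Delta)).
  - exact (HT r b).
  - exact (admissible_comp _ _ _ _ (admissible_S_pmDelta b) (HT (r - 1)%nat b) (HTc (r - 1)%nat b)).
  - exact (admissible_comp _ _ _ _ (HT r true) (HT s false) (HTc s false)).
  - exact (HTt r).
  - exact (admissible_comp _ _ _ _ (admissible_supOn _ _ (admissible_abs _ _ admissible_Delta))
             (HTt (r - 1)%nat) (HTtc (r - 1)%nat)).
Qed.

Lemma admissible_norm_lipschitz P K : admissible P K -> norm_lipschitz P.
Proof.
  intros [HK HPL _ _ _]. exists K. split; auto. intros x y Hx Hy.
  destruct (cadlag_bounded _ (cadlag_plus x (opp y) Hx (cadlag_opp y Hy))) as [B HB].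
  assert (HM : forall s, I01 s -> Rabs (x s - y s) <= supnorm (fun t => x t - y t)).
  { intros s Hs. apply Lub_Rbar_real_ub; [|exists s; auto].
    exists B. intros w [u [Hu ->]]. exact (HB u Hu). }
  apply Lub_Rbar_real_le.
  - exists (Rabs (P x 0 - P y 0)), 0. split; auto. unfold I01; lra.
  - intros w [u [Hu ->]]. apply HPL; auto.
Qed.

Lemma admissible_jointly_J1_continuous P K x : admissible P K -> cadlag x ->
  jointly_J1_continuous_at P x.
Proof.
  intros [HK HPL HC _ _] Hx xn Hxn [ln [Hln [Hid Hconv]]].
  exists ln. split; [exact Hln|]. split; [exact Hid|]. split; [exact Hconv|].
  intros eps Heps. assert (Hd : 0 < eps / (K + 1)) by (apply Rdiv_lt_0_compat; lra).
  destruct (Hconv _ Hd) as [N HN]. exists N. intros n Hn t Ht. rewrite HC by auto.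
  eapply Rle_trans.
  - exact (HPL _ x _ (cadlag_comp _ _ (Hxn n) (Hln n)) Hx (HN n Hn) t Ht).
  - replace (K * (eps / (K + 1))) with (eps - eps / (K + 1)) by (field; lra). lra.
Qed.

Theorem proposition2p2 :
  forall Psi : (R -> R) -> (R -> R), in_family Psi ->
    norm_lipschitz Psi /\ Lambda_compatible Psi /\
    (forall x, cadlag x -> jointly_J1_continuous_at Psi x).
Proof.
  intros Psi HPsi. destruct (in_family_admissible Psi HPsi) as [K HK].
  split; [|split].
  - exact (admissible_norm_lipschitz Psi K HK).
  - exact (admissible_compat Psi K HK).
  - intros x Hx. exact (admissible_jointly_J1_continuous Psi K x HK Hx).
Qed.
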